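(* Let $K$ be a semifield. Let $P$ be a polygon with vertex set $V$ and a non-empty dissection $D$, and let $d=\{\zeta,\eta\}\in D$ be such that $D = \{d\}\cup D_2$ where $D_2$ is a dissection of the subpolygon $P_2$ with vertex set $V_2 = \{\varepsilon \in V : \eta \le \varepsilon \le \zeta\}$. If $f : \operatorname{diag}(P) \to K$ satisfies the $T$-path formula with respect to $D$, then $f|_{\operatorname{diag}(P_2)}$ satisfies the $T$-path formula with respect to $D_2$.
   Context: A semifield is a set $K$ with binary operations $+,\cdot$ such that $+$ is associative and commutative, $(K,\cdot)$ is a commutative group, and $\cdot$ distributes over $+$. A polygon is a finite set of at least three vertices with a cyclic order, pictured as a convex polygon in the plane with vertices anticlockwise. ''$a\le\varepsilon\le b$'' means $\varepsilon$ lies on the cyclic interval from $a$ to $b$ in the positive direction, endpoints included. A subpolygon is a subset of at least three vertices with induced cyclic order. A diagonal is a two-element subset of the vertex set (edges included); $\operatorname{diag}(Q)$ denotes the set of diagonals of $Q$; non-edges are internal. Diagonals cross if they consist of four distinct vertices $\alpha,\beta,\gamma,\delta$ appearing cyclically as $\alpha,\gamma,\beta,\delta$ or $\alpha,\delta,\beta,\gamma$. A dissection is a set of pairwise non-crossing internal diagonals. For a dissection $D$ of a polygon $Q$ and vertices $\pi_1\neq\pi_p$, a $T$-path from $\pi_1$ to $\pi_p$ is a tuple $(\pi_1,\dots,\pi_p)$ of vertices of $Q$ with: (i) $\{\pi_1,\pi_2\},\dots,\{\pi_{p-1},\pi_p\}$ pairwise different diagonals; (ii) no $\{\pi_i,\pi_{i+1}\}$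 crosses a diagonal of $D$; (iii) each $\{\pi_{2j},\pi_{2j+1}\}$ lies in $D$, and these cross the segment $\{\pi_1,\pi_p\}$ at pairwise different points progressing monotonically from $\pi_1$ to $\pi_p$. $\mathcal{T}_{Q,D}(\alpha,\beta)$ is the set of these. With $f(\alpha,\beta):=f(\{\alpha,\beta\})$, $f(\pi) := \prod_{i\text{ odd}} f(\pi_i,\pi_{i+1}) / \prod_{j\text{ even}} f(\pi_j,\pi_{j+1})$. A map $f:\operatorname{diag}(Q)\to K$ satisfies the $T$-path formula with respect to $D$ if $f(\alpha,\beta) = \sum_{\pi\in\mathcal{T}_{Q,D}(\alpha,\beta)} f(\pi)$ for all vertices $\alpha\neq\beta$ of $Q$. *)

From HB Require Import structures.
From mathcomp Require Import all_boot.

Set Implicit Arguments.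
Unset Strict Implicit.
Unset Printing Implicit Defensive.

Record semifield := Semifield {
  sf_car :> Type;
  sf_add : sf_car -> sf_car -> sf_car;
  sf_mul : sf_car -> sf_car -> sf_car;
  sf_one : sf_car;
  sf_inv : sf_car -> sf_car;
  sf_addA : associative sf_add;
  sf_addC : commutative sf_add;
  sf_mulA : associative sf_mul;
  sf_mulC : commutative sf_mul;
  sf_mul1 : left_id sf_one sf_mul;
  sf_mulV : forall x, sf_mul x (sf_inv x) = sf_one;
  sf_mulDl : left_distributive sf_mul sf_add
}.

(* Sum of a finite family in a semifield: only defined (Some) on a    *)
(* nonempty list; the empty sum does not exist (no zero).            *)
Definition sf_osum (K : semifield) (s : seq K) : option K :=
  match s with
  | [::] => None
  | x :: s' => Some (foldr (@sf_add K) x s')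
  end.

Definition sf_prod (K : semifield) (s : seq K) : K :=
  foldr (@sf_mul K) (@sf_one K) s.

Section Polygon.
Variable n : nat.
(* Vertices are 'I_n, with the cyclic (anticlockwise) order 0,1,...,n-1. *)
(* A polygon is a subset Q : {set 'I_n} (with >= 3 elements) carrying  *)
(* the induced cyclic order.                                           *)

Definition cyc_le (a e b : 'I_n) : bool :=
  if (a <= b)%N then (a <= e <= b)%N else (a <= e)%N || (e <= b)%N.

Definition cyc_lt (a e b : 'I_n) : bool :=
  [&& cyc_le a e b, e != a & e != b].

Definition cross (d1 d2 : {set 'I_n}) : bool :=
  [exists a, exists b, exists c, exists e,
    [&& d1 == [set a; b], d2 == [set c; e], uniq [:: a; b; c; e],
        cyc_lt a c b & cyc_lt b e a]].

(* diagonal of Q: two-element subset of Q (edges included) *)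
Definition is_diag (Q : {set 'I_n}) (d : {set 'I_n}) : bool :=
  (d \subset Q) && (#|d| == 2).

Definition is_edge (Q : {set 'I_n}) (d : {set 'I_n}) : bool :=
  [exists a, exists b,
    [&& d == [set a; b], a != b & [forall e, (e \in Q) ==> ~~ cyc_lt a e b]]].

Definition internal (Q d : {set 'I_n}) : bool := is_diag Q d && ~~ is_edge Q d.

Definition dissection (Q : {set 'I_n}) (D : {set {set 'I_n}}) : bool :=
  [forall d in D, internal Q d] && [forall d1 in D, forall d2 in D, ~~ cross d1 d2].

Definition steps (p : seq 'I_n) : seq {set 'I_n} :=
  [seq [set x.1; x.2] | x <- zip p (behead p)].

(* For diagonals d, d' crossing the segment {a,b}: d' lies on the b-side *)
(* of d, i.e. the crossing point of d' with the segment from a to b     *)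
(* comes no earlier than the one of d.                                   *)
Definition before (a b : 'I_n) (d d' : {set 'I_n}) : bool :=
  [exists x, exists y,
    [&& d == [set x; y], cyc_lt a x b, cyc_lt b y a &
        d' \subset [set e | cyc_le x e y]]].

(* The D-steps: {p_{2j}, p_{2j+1}} (1-indexed), i.e. odd 0-indexed steps *)
Definition even_steps (p : seq 'I_n) : seq {set 'I_n} :=
  [seq nth set0 (steps p) k | k <- iota 0 (size (steps p)) & odd k].
Definition odd_steps (p : seq 'I_n) : seq {set 'I_n} :=
  [seq nth set0 (steps p) k | k <- iota 0 (size (steps p)) & ~~ odd k].

Definition tpath (Q : {set 'I_n}) (D : {set {set 'I_n}}) (a b : 'I_n)
    (p : seq 'I_n) : bool :=
  [&& p == a :: behead p, last a p == b, a != b,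
      all (fun v => v \in Q) p,
      all (is_diag Q) (steps p), uniq (steps p),
      all (fun s => [forall e in D, ~~ cross s e]) (steps p),
      all (fun s => s \in D) (even_steps p),
      all (fun s => cross s [set a; b]) (even_steps p) &
      pairwise (fun s s' => (s != s') && before a b s s') (even_steps p)].

Definition tweight (K : semifield) (f : {set 'I_n} -> K) (p : seq 'I_n) : K :=
  sf_mul (sf_prod [seq f s | s <- odd_steps p])
         (sf_inv (sf_prod [seq f s | s <- even_steps p])).

Definition tpath_formula (K : semifield) (Q : {set 'I_n})
    (D : {set {set 'I_n}}) (f : {set 'I_n} -> K) : Prop :=
  forall a b : 'I_n, a \in Q -> b \in Q -> a != b ->
    exists2 s : seq (seq 'I_n), uniq s &
      (forall p, p \in s = tpath Q D a b p) /\
      sf_osum [seq tweight f p | p <- s] = Some (f [set a; b]).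

Definition arc_set (eta zeta : 'I_n) : {set 'I_n} :=
  [set e | cyc_le eta e zeta].

End Polygon.

(* For a and b on the arc from eta to zeta, the T-paths from a to b in P with
   respect to D are exactly those in P2 with respect to D2.  Every vertex of a
   T-path is an endpoint or lies on one of its D-steps, and all diagonals of D
   lie in P2, so the path stays in P2.  A diagonal of P2 never crosses
   d = {zeta, eta}; hence d obstructs no step, and d cannot be a D-step, since
   D-steps must cross {a, b}.  The two sums in the T-path formula are thus the
   same sum. *)

From mathcomp Require Import all_boot.
From mathcomp Require Import zify.

Set Implicit Arguments.
Unset Strict Implicit.
Unset Printing Implicit Defensive.

Section CyclicOrder.
Variable n : nat.
Implicit Types a b c e x y : 'I_n.

Lemma cyc_le_l a b : cyc_le a a b.
Proof. by rewrite /cyc_le; case: ifP => ?; rewrite leqnn ?orbT //; lia. Qed.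

Lemma cyc_le_r a b : cyc_le a b b.
Proof. by rewrite /cyc_le; case: ifP => ?; rewrite leqnn ?orbT ?andbT. Qed.

Lemma cyc_lt_rot a b c e :
  cyc_lt a c b -> cyc_lt b e a -> cyc_lt c b e && cyc_lt e a c.
Proof. by rewrite /cyc_lt /cyc_le -!val_eqE /=; repeat case: ifP => ?; lia. Qed.

Lemma cyc_lt_arc_ends eta zeta x y :
  cyc_le eta x zeta -> cyc_le eta y zeta ->
  cyc_lt x zeta y -> cyc_lt y eta x -> False.
Proof. by rewrite /cyc_lt /cyc_le -!val_eqE /=; repeat case: ifP => ?; lia. Qed.

Lemma cross_sym (d1 d2 : {set 'I_n}) : cross d1 d2 -> cross d2 d1.
Proof.
case/existsP=> a /existsP[b /existsP[c /existsP[e /and5P[d1E d2E abce acb bea]]]].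
apply/existsP; exists c; apply/existsP; exists e; apply/existsP; exists b.
apply/existsP; exists a; rewrite d2E (eqP d1E) setUC eqxx.
have /andP[-> ->] := cyc_lt_rot acb bea.
by move: abce; rewrite /= !inE -!val_eqE /=; lia.
Qed.

(* Both ends of the chord {zeta, eta} bound the arc, so a diagonal of the arc
   has both endpoints on the same side of it. *)
Lemma arc_not_cross_chord eta zeta (d : {set 'I_n}) :
  d \subset arc_set eta zeta -> ~~ cross d [set zeta; eta].
Proof.
move=> dA; apply/negP.
case/existsP=> x /existsP[y /existsP[c /existsP[e /and5P[dE chE xyce xcy yex]]]].
have inA z : z \in [set x; y] -> cyc_le eta z zeta.
  by move=> z_xy; have := subsetP dA z; rewrite inE (eqP dE); apply.
have [xA yA] := (inA x (set21 x y), inA y (set22 x y)).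
have c_ch : c \in [set zeta; eta] by rewrite (eqP chE) set21.
have e_ch : e \in [set zeta; eta] by rewrite (eqP chE) set22.
have ce : c != e by move: xyce; rewrite /= !inE -!val_eqE /=; lia.
case/set2P: c_ch e_ch ce xcy yex => -> /set2P[] -> //; rewrite ?eqxx // => _ xcy yex.
- exact: cyc_lt_arc_ends xA yA xcy yex.
- exact: cyc_lt_arc_ends yA xA yex xcy.
Qed.

End CyclicOrder.

Section TPaths.
Variable n : nat.
Implicit Types (p q : seq 'I_n) (a b x : 'I_n) (s : {set 'I_n}).

Lemma even_steps_cons x0 x1 x2 q :
  even_steps [:: x0, x1, x2 & q] = [set x1; x2] :: even_steps (x2 :: q).
Proof.
rewrite /even_steps /=; congr (_ :: _).
rewrite -[iota 2 _]/(iota (2 + 0) _) iotaDl filter_map -map_comp.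
by rewrite (@eq_filter _ _ odd) // => k /=; rewrite negbK.
Qed.

Lemma mem_ends_or_even_steps q a x : x \in a :: q ->
  [\/ x = a, x = last a q | exists2 s, s \in even_steps (a :: q) & x \in s].
Proof.
have [k] := ubnP (size q); elim: k q a => // k IHk [|y [|z q]] a /= size_q.
- by rewrite inE => /eqP; constructor 1.
- by rewrite !inE => /orP[]/eqP; [constructor 1|constructor 2].
rewrite in_cons => /orP[/eqP->|]; first by constructor 1.
have yz_ev : [set y; z] \in even_steps [:: a, y, z & q].
  by rewrite even_steps_cons mem_head.
rewrite in_cons => /orP[/eqP->|].
  by constructor 3; exists [set y; z]; rewrite ?set21.
case/(IHk q z (ltnW size_q))=> [->|->|[s s_ev x_s]].
- by constructor 3; exists [set y; z]; rewrite ?set22.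
- by constructor 2.
- by constructor 3; exists s; rewrite // even_steps_cons inE s_ev orbT.
Qed.

Lemma steps_sub p s : s \in steps p -> {subset s <= p}.
Proof.
elim: p => [|x [|y q] IHp] //; rewrite [steps _]/= inE.
case/orP=> [/eqP-> z|/IHp s_yq z /s_yq z_yq].
  by case/set2P=> ->; rewrite !inE eqxx ?orbT.
by rewrite in_cons z_yq orbT.
Qed.

Lemma tpath_sub (Q A : {set 'I_n}) (D : {set {set 'I_n}}) a b p :
  {in D, forall e : {set 'I_n}, e \subset A} -> a \in A -> b \in A ->
  tpath Q D a b p -> {subset p <= A}.
Proof.
move=> DA aA bA /and5P[/eqP pE /eqP last_p _ _ /and5P[_ _ _ ev_D _]] x.
rewrite pE => /mem_ends_or_even_steps[->|->|[s s_ev x_s]] //.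
  by move: last_p; rewrite {1}pE /= => ->.
by rewrite -pE in s_ev; apply: subsetP (DA s (allP ev_D s s_ev)) x x_s.
Qed.

End TPaths.

Section ArcRestriction.
Variables (n : nat) (eta zeta : 'I_n) (D D2 : {set {set 'I_n}}).
Hypothesis D_split : D = [set [set zeta; eta]] :|: D2.
Hypothesis D2_arc : {in D2, forall e : {set 'I_n}, e \subset arc_set eta zeta}.
Local Notation A := (arc_set eta zeta).

Lemma chord_sub_arc : [set zeta; eta] \subset A.
Proof. by rewrite subUset !sub1set !inE cyc_le_l cyc_le_r. Qed.

Lemma D_sub_arc : {in D, forall e : {set 'I_n}, e \subset A}.
Proof.
by move=> e; rewrite D_split !inE => /orP[/eqP->|/D2_arc]; rewrite ?chord_sub_arc.
Qed.

Lemma tpath_arc_eq a b p : a \in A -> b \in A -> {subset p <= A} ->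
  tpath [set: 'I_n] D a b p = tpath A D2 a b p.
Proof.
move=> aA bA pA; have steps_A s : s \in steps p -> s \subset A.
  by move=> s_p; apply/subsetP => x /(steps_sub s_p)/pA.
rewrite /tpath; have -> : all (fun v => v \in A) p by apply/allP.
have -> : all (fun v => v \in [set: 'I_n]) p by apply/allP => v; rewrite inE.
rewrite (@eq_in_all _ (is_diag [set: 'I_n]) (is_diag A)); last first.
  by move=> s /steps_A s_A; rewrite /is_diag subsetT s_A.
rewrite (@eq_in_all _ (fun s => [forall e in D, ~~ cross s e])
                      (fun s => [forall e in D2, ~~ cross s e])); last first.
  move=> s /steps_A s_A; rewrite D_split /=.
  apply/forall_inP/forall_inP => [s_D e e_D2|s_D2 e].
    by apply: s_D; rewrite inE e_D2 orbT.
  by rewrite !inE => /orP[/eqP->|/s_D2//]; apply: arc_not_cross_chord.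
(* What remains differs only in whether the D-steps lie in D or in D2. *)
do 7 congr (_ && _); apply: andb_id2r => /andP[/allP ab_cross _].
apply: eq_in_all => s /ab_cross.
have ab_A : [set a; b] \subset A by rewrite subUset !sub1set aA bA.
rewrite D_split !inE; case: eqP => //= -> /cross_sym ab_chord.
by case/negP: (arc_not_cross_chord ab_A).
Qed.

Lemma tpath_arc a b p : a \in A -> b \in A ->
  tpath [set: 'I_n] D a b p = tpath A D2 a b p.
Proof.
move=> aA bA; apply/idP/idP => tp.
  by rewrite -tpath_arc_eq //; apply: tpath_sub D_sub_arc aA bA tp.
have pA : {subset p <= A} by case/and5P: tp => _ _ _ /allP.
by rewrite tpath_arc_eq.
Qed.

End ArcRestriction.

Theorem lemma3p5 (K : semifield) (n : nat) (D D2 : {set {set 'I_n}})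
    (zeta eta : 'I_n) (f : {set 'I_n} -> K) :
  (3 <= n)%N ->
  dissection [set: 'I_n] D ->
  D != set0 ->
  [set zeta; eta] \in D ->
  D = [set [set zeta; eta]] :|: D2 ->
  (3 <= #|arc_set eta zeta|)%N ->
  dissection (arc_set eta zeta) D2 ->
  tpath_formula [set: 'I_n] D f ->
  tpath_formula (arc_set eta zeta) D2 f.
Proof.
move=> _ _ _ _ D_split _ /andP[/forall_inP D2_internal _] f_tpath a b aA bA ab.
have D2_arc : {in D2, forall e : {set 'I_n}, e \subset arc_set eta zeta}.
  by move=> e /D2_internal /andP[/andP[]].
have [s s_uniq [s_tpaths s_sum]] := f_tpath a b (in_setT a) (in_setT b) ab.
by exists s => //; split=> // p; rewrite s_tpaths (tpath_arc D_split D2_arc).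
Qed.
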